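(* Let $\rho_1\in(0,1)$, $\rho_2\in(0,1-\rho_1)$. In a sample $\eta$ of $\mu^{\rho_1,\rho_2}$ there exists, with probability $1$, a site $i\in\mathbb{Z}$ with $\eta(i)=2$ (a second class particle).
   Context: $\mu^{\rho_1,\rho_2}$ (queueing construction): let $(a(i))_{i\in\mathbb{Z}}$, $(s(i))_{i\in\mathbb{Z}}$ be independent families of i.i.d. Bernoulli variables with parameters $\rho_1$ and $\rho_1+\rho_2$; $\mathcal{A}_{[i,j]}=\sum_{k=i}^ja(k)$, $\mathcal{S}_{[i,j]}=\sum_{k=i}^js(k)$ (empty sums $0$); $Q_i=\sup_{j\ge i-1}(\mathcal{A}_{[i,j]}-\mathcal{S}_{[i,j]})$; $d(i)=1$ iff $s(i)=1$ and ($a(i)=1$ or $Q_{i+1}\ge1$) (equivalently, each $i$ with $a(i)=1$ is matched to the largest $j\le i$ with $s(j)=1$ not yet matched, and $d=1$ at matched sites). Set $\eta(i)=1$ if $d(i)=1$, $\eta(i)=2$ if $s(i)=1,d(i)=0$, $\eta(i)=+\infty$ if $s(i)=0$; $\mu^{\rho_1,\rho_2}$ is the law of $\eta$. *)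

From HB Require Import structures.
From mathcomp Require Import all_boot all_order all_algebra.
From mathcomp Require Import all_classical all_reals.
From mathcomp Require Import ereal measure probability.
Set Implicit Arguments. Unset Strict Implicit. Unset Printing Implicit Defensive.
Import Order.TTheory GRing.Theory Num.Theory.
Local Open Scope classical_set_scope.
Local Open Scope ring_scope.

Definition mutually_independent {R : realType} {d : measure_display}
  {T : measurableType d} (P : probability T R) {I : eqType} (X : I -> T -> bool) :=
  forall (F : seq I) (v : I -> bool), uniq F ->
    P (\big[setI/setT]_(i <- F) [set w | X i w = v i])
    = (\prod_(i <- F) P [set w | X i w = v i])%E.

Definition join_family {T : Type} (a s : int -> T -> bool) : int + int -> T -> bool :=
  fun k => match k with inl i => a i | inr i => s i end.

Definition cnt {T : Type} (x : int -> T -> bool) (w : T) (i : int) (n : nat) : nat :=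
  \sum_(k < n) (x (i + (k : nat)%:Z)%R w : nat).

(* Q_{i+1} >= 1, with Q_{i+1} = sup_{j >= i} (A_[i+1,j] - S_[i+1,j]);
   j = i + n, n >= 0, so the interval [i+1, j] has length n. *)
Definition Q_ge1 {T : Type} (a s : int -> T -> bool) (w : T) (i : int) : Prop :=
  exists n : nat, (cnt a w (i + 1)%R n >= cnt s w (i + 1)%R n + 1)%N.

Definition dep {T : Type} (a s : int -> T -> bool) (w : T) (i : int) : Prop :=
  s i w /\ (a i w \/ Q_ge1 a s w i).

Inductive site := One | Two | Infty.

Definition config_eta {T : Type} (a s : int -> T -> bool) (w : T) (i : int) : site :=
  if s i w then (if pselect (dep a s w i) then One else Two) else Infty.

From HB Require Import structures.
From mathcomp Require Import all_boot all_order all_algebra.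
From mathcomp Require Import all_classical all_reals.
From mathcomp Require Import ereal measure probability.
From mathcomp Require Import sequences normedtype.
From mathcomp Require Import zify ring lra.
Import Order.TTheory GRing.Theory Num.Theory.
Local Open Scope classical_set_scope.
Local Open Scope ring_scope.

(* Let [walk w b n] be the number of arrivals minus the number of services on
   the sites [b, ..., b + n - 1].  If this walk is eventually negative, the last
   time it leaves [0, oo) is a service without arrival after which the queue
   never refills: a site with [eta = 2].  So without second class particle,
   either the walk started at 0 is unbounded above, or it is bounded by some
   [M] and then the walk from [-L] to [0] is at least [-M] for every [L].  Both
   events are null because the walk has negative drift [rho1 - (rho1 + rho2)]:
   a Chernoff bound [P(walk b n >= M) <= theta^-M q^n] with [q < 1] holds for
   [theta = 1 + rho2].  The Chernoff bound only uses the product form of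
   independence: it is proved on cylinder events, fixing one coordinate at a
   time. *)

Lemma cntD {T : Type} (x : int -> T -> bool) w b m n :
  cnt x w b (m + n) = (cnt x w b m + cnt x w (b + m%:Z)%R n)%N.
Proof.
rewrite /cnt big_split_ord; congr addn; apply: eq_bigr => k _.
by rewrite PoszD addrA.
Qed.

Lemma cntS {T : Type} (x : int -> T -> bool) w b n :
  cnt x w b n.+1 = (cnt x w b n + x (b + n%:Z)%R w)%N.
Proof. by rewrite /cnt big_ord_recr. Qed.

Lemma cnt_sum {T : Type} (x : int -> T -> bool) w b n :
  (cnt x w b n)%:Z = \sum_(k <- iota 0 n | x (b + k%:Z) w) 1.
Proof.
rewrite /cnt -(big_mkord xpredT (fun k => (x (b + k%:Z) w : nat))) /index_iota subn0.
rewrite (big_morph Posz PoszD erefl) [RHS]big_mkcond.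
by apply: eq_bigr => k _; case: (x _ w).
Qed.

Section Walk.
Context {T : Type} (a s : int -> T -> bool).

Definition walk (w : T) (b : int) (n : nat) : int :=
  (cnt a w b n)%:Z - (cnt s w b n)%:Z.

Lemma walk0 w b : walk w b 0 = 0.
Proof. by rewrite /walk /cnt !big_ord0. Qed.

Lemma walkS w b n :
  walk w b n.+1 = walk w b n + (a (b + n%:Z) w)%:Z - (s (b + n%:Z) w)%:Z.
Proof. rewrite /walk !cntS !PoszD; ring. Qed.

Lemma walkD w b m n : walk w b (m + n) = walk w b m + walk w (b + m%:Z) n.
Proof. rewrite /walk !cntD !PoszD; ring. Qed.

Lemma config_eta_Two w i : s i w -> ~~ a i w ->
  (forall n, walk w (i + 1) n <= 0) -> config_eta a s w i = Two.
Proof.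
move=> si nai walk_le0; rewrite /config_eta si; case: pselect => // dep_i; exfalso.
case: dep_i => _ [ai | [n Q1]]; first by rewrite ai in nai.
by have := walk_le0 n; rewrite /walk; lia.
Qed.

Lemma exists_Two_of_walk_lt0 w b t0 :
  (forall t, (t0 <= t)%N -> walk w b t < 0) -> exists i, config_eta a s w i = Two.
Proof.
move=> walk_lt0.
have ex0 : exists k, (k <= t0)%N && (0 <= walk w b k) by exists 0%N; rewrite walk0.
have bnd k : (k <= t0)%N && (0 <= walk w b k) -> (k <= t0)%N by case/andP.
have [k /andP[_ walk_k] k_last] := ex_maxnP ex0 bnd.
have walk_after t : (k < t)%N -> walk w b t < 0.
  move=> kt; have [/walk_lt0 //|tt0] := leqP t0 t.
  by rewrite ltNge; apply/negP => walk_t; have := k_last t; rewrite ltnW // walk_t; lia.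
have := walk_after k.+1 (ltnSn k); rewrite walkS.
case sk: (s (b + k%:Z) w); case ak: (a (b + k%:Z) w) => //= drop; try lia.
exists (b + k%:Z); apply: config_eta_Two; rewrite ?ak // => n.
have -> : b + k%:Z + 1 = b + k.+1%:Z by rewrite -addn1 PoszD addrA.
have := walk_after (k.+1 + n)%N (ltn_addr n (ltnSn k)).
rewrite walkD walkS ak sk; lia.
Qed.

Definition walk_unbounded : set T :=
  \bigcap_(M : nat) \bigcup_n [set w | M%:Z <= walk w 0 n].

Definition walk_bounded_below (M : nat) : set T :=
  \bigcap_(L : nat) [set w | - M%:Z <= walk w (- L%:Z) L].

Lemma no_Two_sub : ~` [set w | exists i, config_eta a s w i = Two] `<=`
  walk_unbounded `|` \bigcup_M walk_bounded_below M.
Proof.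
move=> w noTwo.
case: (pselect (exists M : nat, forall n, walk w 0 n < M%:Z)) => [[M walk_ltM]|unbdd].
- right; exists M => // L _ /=; rewrite leNgt; apply/negP => walk_L; apply: noTwo.
  apply: (@exists_Two_of_walk_lt0 w (- L%:Z) L) => t Lt.
  rewrite -(subnKC Lt) walkD addNr.
  by have := ltrD walk_L (walk_ltM (t - L)%N); rewrite addNr.
- left => M _; apply: contrapT => bdd; apply: unbdd; exists M => n.
  by rewrite ltNge; apply/negP => walk_n; apply: bdd; exists n.
Qed.
End Walk.

Lemma lee_geometric_le0 {R : realType} (x : \bar R) (C q : R) : `|q| < 1 ->
  (forall n, (x <= (C * q ^+ n)%:E)%E) -> (x <= 0)%E.
Proof.
move=> q_lt1 x_le.
have cvgCq : (fun n => (geometric C q n)%:E) @ \oo --> 0%:E.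
  by apply: cvg_EFin; [exact: nearW | exact: cvg_geometric].
have -> : (0 : \bar R) = lim ((fun n => (geometric C q n)%:E) @ \oo).
  by rewrite (cvg_lim _ cvgCq).
by apply: lime_ge; [exact: cvgP cvgCq | exact: nearW].
Qed.

Lemma measure_bigcup_le_geometric {d} {R : realType} {T : measurableType d}
    (mu : {measure set T -> \bar R}) {A : nat -> set T} {C q : R} :
  (forall n, measurable (A n)) -> 0 <= C -> 0 < q < 1 ->
  (forall n, (mu (A n) <= (C * q ^+ n)%:E)%E) ->
  (mu (\bigcup_n A n) <= (C / (1 - q))%:E)%E.
Proof.
move=> mA C_ge0 /andP[q_gt0 q_lt1] muA.
apply: le_trans (measure_sigma_subadditive mu mA (bigcupT_measurable _ mA)
  (@subset_refl _ (\bigcup_n A n))) _.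
apply: lime_le; first by apply: is_cvg_nneseries => n _ _.
apply: nearW => N; apply: le_trans (lee_sum _ (fun n _ => muA n)) _.
rewrite sumEFin lee_fin.
by apply: (geometric_le_lim N C_ge0 q_gt0); rewrite gtr0_norm.
Qed.

Lemma exprz_ege1 {R : numFieldType} (x : R) (n : int) : 1 <= x -> 0 <= n -> 1 <= x ^ n.
Proof. by move=> x_ge1; case: n => // k _; exact: exprn_ege1. Qed.

Section Chernoff.
Context {R : realType} {d : measure_display} {T : measurableType d}.
Context (P : probability T R) {I : eqType} (X : I -> T -> bool).
Context (p : I -> R) (e : I -> int).
Hypothesis mX : forall j, measurable [set w | X j w].
Hypothesis PX : forall j, P [set w | X j w] = (p j)%:E.
Hypothesis indepX : mutually_independent P X.

Definition bern (j : I) (b : bool) : R := if b then p j else 1 - p j.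
Definition cylinder (H : seq I) (v : I -> bool) : set T :=
  \big[setI/setT]_(j <- H) [set w | X j w = v j].
Definition wsum (F : seq I) (w : T) : int := \sum_(j <- F | X j w) e j.

Lemma setX_eq j b :
  [set w | X j w = b] = if b then [set w | X j w] else ~` [set w | X j w].
Proof. by case: b; apply/seteqP; split => w /=; case: (X j w). Qed.

Lemma measurable_X_eq j b : measurable [set w | X j w = b].
Proof. by rewrite setX_eq; case: b; [|apply: measurableC]. Qed.

Lemma P_X_eq j b : P [set w | X j w = b] = (bern j b)%:E.
Proof. by rewrite setX_eq; case: b; rewrite ?probability_setC ?PX. Qed.

Lemma measurable_cylinder H v : measurable (cylinder H v).
Proof. by apply: bigsetI_measurable => j _; exact: measurable_X_eq. Qed.

Lemma P_cylinder H v : uniq H ->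
  P (cylinder H v) = (\prod_(j <- H) bern j (v j))%:E.
Proof.
by move=> uH; rewrite /cylinder indepX // -prodEFin; apply: eq_bigr => j _; exact: P_X_eq.
Qed.

Lemma prod_bern_ge0 H v : uniq H -> 0 <= \prod_(j <- H) bern j (v j).
Proof. by move=> /(@P_cylinder H v) PH; rewrite -lee_fin -PH measure_ge0. Qed.

Lemma wsum_ge_cons j F M : [set w | M <= wsum (j :: F) w] =
  ([set w | X j w = true] `&` [set w | M - e j <= wsum F w]) `|`
  ([set w | X j w = false] `&` [set w | M <= wsum F w]).
Proof.
apply/seteqP; split => w /=; rewrite /wsum big_cons; case: (X j w) => /=.
- by move=> ?; left; split => //; lia.
- by move=> ?; right.
- by case=> -[] // _; lia.
- by case=> -[].
Qed.

Lemma wsum_nil : wsum [::] = fun=> 0.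
Proof. by apply/funext => w; rewrite /wsum big_nil. Qed.

Lemma measurable_wsum_ge F M : measurable [set w | M <= wsum F w].
Proof.
elim: F M => [|j F IH] M.
  rewrite wsum_nil.
  by case: (M <= 0); rewrite ?set_true ?set_false; [exact: measurableT | exact: measurable0].
by rewrite wsum_ge_cons; apply: measurableU; apply: measurableI;
  exact: measurable_X_eq || exact: IH.
Qed.

Lemma cylinder_cons_upd H v j b : j \notin H ->
  cylinder (j :: H) [eta v with j |-> b] = [set w | X j w = b] `&` cylinder H v.
Proof.
move=> jH; rewrite /cylinder big_cons /= eqxx; congr setI.
by apply: eq_big_seq => k kH /=; case: eqP kH jH => // -> ->.
Qed.

Lemma prod_bern_upd H v j b : j \notin H ->
  \prod_(k <- H) bern k ([eta v with j |-> b] k) = \prod_(k <- H) bern k (v k).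
Proof. by move=> jH; apply: eq_big_seq => k kH /=; case: eqP kH jH => // -> ->. Qed.

Variable theta : R.
Hypothesis theta_ge1 : 1 <= theta.

Definition mgf (j : I) : R := p j * theta ^ e j + (1 - p j).

Lemma chernoff_cylinder F H v M : uniq (H ++ F) ->
  (P (cylinder H v `&` [set w | (M <= wsum F w)%R]) <=
   ((\prod_(j <- H) bern j (v j)) * theta ^ (- M) * \prod_(j <- F) mgf j)%:E)%E.
Proof.
elim: F H v M => [|j F IH] H v M uHF.
  rewrite wsum_nil big_nil mulr1; rewrite cats0 in uHF.
  have prod_ge0 := prod_bern_ge0 H v uHF.
  have [M_le0|M_gt0] := lerP M 0.
    rewrite set_true setIT P_cylinder // lee_fin ler_peMr //.
    by apply: exprz_ege1; rewrite // oppr_ge0.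
  rewrite set_false setI0 measure0 lee_fin mulr_ge0 // exprz_ge0 //.
  by apply: le_trans theta_ge1.
have jH : j \notin H.
  by move: uHF; rewrite cat_uniq => /and3P[_ /hasPn jH _]; apply: jH; rewrite mem_head.
have uHF' : uniq ((j :: H) ++ F) by move: uHF; rewrite -cat1s uniq_catCA.
have mcyl b N := measurableI _ _ (measurable_cylinder (j :: H) [eta v with j |-> b])
  (measurable_wsum_ge F N).
rewrite wsum_ge_cons setIUr !setIA -![cylinder H v `&` _]setIC -!cylinder_cons_upd //.
apply: le_trans (measureU2 _ (mcyl true _) (mcyl false _)) _.
apply: le_trans (leeD (IH _ _ _ uHF') (IH _ _ _ uHF')) _.
rewrite -EFinD lee_fin !big_cons /= eqxx !prod_bern_upd //.
have theta_neq0 : theta != 0 by apply: lt0r_neq0; apply: lt_le_trans theta_ge1.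
rewrite opprB addrC expfzDr // /mgf /bern.
rewrite le_eqVlt; apply/orP; left; apply/eqP; ring.
Qed.

Lemma chernoff F M : uniq F ->
  (P [set w | (M <= wsum F w)%R] <= (theta ^ (- M) * \prod_(j <- F) mgf j)%:E)%E.
Proof.
move=> uF; have := chernoff_cylinder F [::] (fun=> true) M uF.
by rewrite /cylinder !big_nil setTI mul1r.
Qed.

End Chernoff.

(* With [delta = r - p] the product is [1 + delta^2 (p (1 - r) - 1) / (1 + delta)]. *)
Lemma mgf_product_lt1 {R : realFieldType} {p r : R} : 0 <= p -> p < r -> r <= 1 ->
  0 < (p * (1 + (r - p)) + (1 - p)) * (r / (1 + (r - p)) + (1 - r)) < 1.
Proof.
move=> p_ge0 p_lt_r r_le1; set delta := r - p.
have delta_gt0 : 0 < delta by rewrite subr_gt0.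
have -> : p * (1 + delta) + (1 - p) = 1 + p * delta by ring.
have -> : r / (1 + delta) + (1 - r) = (1 + delta * (1 - r)) / (1 + delta).
  by field; lra.
have p_lt1 : p * (1 - r) < 1 by nra.
rewrite mulrA; apply/andP; split.
  by apply: divr_gt0; [apply: mulr_gt0 |]; nra.
rewrite ltr_pdivrMr ?mul1r; last lra.
suff : 0 < delta * delta * (1 - p * (1 - r)) by rewrite /delta; nra.
by apply: mulr_gt0; [apply: mulr_gt0 | lra].
Qed.

Section ArrivalsServices.
Context {R : realType} {d : measure_display} {T : measurableType d}.
Context {P : probability T R} {rho1 rho : R} {a s : int -> T -> bool}.
Hypothesis ma : forall i, measurable [set w | a i w].
Hypothesis ms : forall i, measurable [set w | s i w].
Hypothesis Pa : forall i, P [set w | a i w] = rho1%:E.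
Hypothesis Ps : forall i, P [set w | s i w] = rho%:E.
Hypothesis indep : mutually_independent P (join_family a s).

Definition arrival_service_prob (j : int + int) : R := if j is inl _ then rho1 else rho.
Definition arrival_service_sign (j : int + int) : int := if j is inl _ then 1 else -1.

Definition window (b : int) (n : nat) : seq (int + int) :=
  [seq inl (b + k%:Z) | k <- iota 0 n] ++ [seq inr (b + k%:Z) | k <- iota 0 n].

Lemma measurable_join_family j : measurable [set w | join_family a s j w].
Proof. by case: j. Qed.

Lemma P_join_family j : P [set w | join_family a s j w] = (arrival_service_prob j)%:E.
Proof. by case: j. Qed.

Lemma uniq_window b n : uniq (window b n).
Proof.
have addz_inj : injective (fun k : nat => b + k%:Z) by move=> k l /addrI [].
rewrite cat_uniq !map_inj_uniq ?iota_uniq //= ?andbT; last 2 first.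
- by move=> k l [] /addz_inj.
- by move=> k l [] /addz_inj.
by apply/hasPn => _ /mapP[k _ ->]; apply/mapP => -[].
Qed.

Lemma wsum_window b n :
  wsum (join_family a s) arrival_service_sign (window b n) = fun w => walk a s w b n.
Proof.
apply/funext => w; rewrite /wsum /walk !cnt_sum big_cat !big_map /= -sumrN.
by congr (_ + _); apply: eq_bigr.
Qed.

Lemma measurable_walk_ge b n M : measurable [set w | M <= walk a s w b n].
Proof.
by have := measurable_wsum_ge _ arrival_service_sign measurable_join_family (window b n) M;
  rewrite wsum_window.
Qed.

Context {theta : R}.
Hypothesis theta_gt1 : 1 < theta.

Local Notation q := ((rho1 * theta + (1 - rho1)) * (rho / theta + (1 - rho))).

Lemma prod_mgf_window b n :
  \prod_(j <- window b n) mgf arrival_service_prob arrival_service_sign theta j = q ^+ n.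
Proof.
have prod_iota (x : R) : \prod_(k <- iota 0 n) x = x ^+ n.
  by rewrite big_const_seq count_predT size_iota -Monoid.iteropE.
by rewrite big_cat !big_map /mgf /= expr1z exprN1 !prod_iota exprMn.
Qed.

Lemma walk_tail_bound b n M :
  (P [set w | (M <= walk a s w b n)%R] <= (theta ^ (- M) * q ^+ n)%:E)%E.
Proof.
have := chernoff P _ _ arrival_service_sign measurable_join_family P_join_family indep
  _ (ltW theta_gt1) _ M (uniq_window b n).
by rewrite prod_mgf_window wsum_window.
Qed.

Hypothesis q_gt0 : 0 < q.
Hypothesis q_lt1 : q < 1.

Lemma measurable_walk_unbounded : measurable (walk_unbounded a s).
Proof.
apply: bigcapT_measurable => M; apply: bigcupT_measurable => n.
exact: measurable_walk_ge.
Qed.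

Lemma measurable_walk_bounded_below M : measurable (walk_bounded_below a s M).
Proof. by apply: bigcapT_measurable => L; exact: measurable_walk_ge. Qed.

Lemma P_walk_unbounded : P (walk_unbounded a s) = 0%E.
Proof.
have theta_gt0 : 0 < theta by apply: lt_trans theta_gt1.
apply/eqP; rewrite -measure_le0.
apply: (@lee_geometric_le0 _ _ ((1 - q)^-1) theta^-1).
  by rewrite gtr0_norm ?invr_gt0 // invf_lt1.
move=> M; have mwalk n := measurable_walk_ge 0 n M%:Z.
apply: le_trans (le_measure P _ _ (bigcap_inf (i := M) I)) _; rewrite ?inE.
- exact: measurable_walk_unbounded.
- exact: bigcupT_measurable.
have C_ge0 : 0 <= theta ^ (- M%:Z) by apply: exprz_ge0; apply: ltW.
apply: le_trans (measure_bigcup_le_geometric P mwalk C_ge0 _ (walk_tail_bound 0 ^~ M%:Z)) _.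
  by rewrite q_gt0 q_lt1.
by rewrite -exprnN -exprVn mulrC lexx.
Qed.

Lemma P_walk_bounded_below M : P (walk_bounded_below a s M) = 0%E.
Proof.
apply/eqP; rewrite -measure_le0.
apply: (@lee_geometric_le0 _ _ (theta ^ M%:Z) q); first by rewrite gtr0_norm.
move=> L; have := walk_tail_bound (- L%:Z) L (- M%:Z); rewrite opprK.
apply: le_trans; apply: le_measure (bigcap_inf (i := L) I); rewrite inE //.
  exact: measurable_walk_bounded_below.
exact: measurable_walk_ge.
Qed.

Lemma second_class_ae : {ae P, forall w, exists i, config_eta a s w i = Two}.
Proof.
apply: (negligibleS (no_Two_sub a s)); apply: negligibleU.
  by apply/negligibleP; [exact: measurable_walk_unbounded | exact: P_walk_unbounded].
apply: negligible_bigcup => M; apply/negligibleP.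
  exact: measurable_walk_bounded_below.
exact: P_walk_bounded_below.
Qed.

End ArrivalsServices.

Theorem lemmaC1 (R : realType) (d : measure_display) (T : measurableType d)
  (P : probability T R) (rho1 rho2 : R) (a s : int -> T -> bool) :
  0 < rho1 < 1 -> 0 < rho2 < 1 - rho1 ->
  (forall i, measurable [set w | a i w]) ->
  (forall i, measurable [set w | s i w]) ->
  (forall i, P [set w | a i w] = rho1%:E) ->
  (forall i, P [set w | s i w] = (rho1 + rho2)%:E) ->
  mutually_independent P (join_family a s) ->
  {ae P, forall w, exists i : int, config_eta a s w i = Two}.
Proof.
move=> /andP[rho1_gt0 _] /andP[rho2_gt0 rho2_lt] ma ms Pa Ps indep.
have rho1_lt_rho : rho1 < rho1 + rho2 by lra.
have rho_le1 : rho1 + rho2 <= 1 by lra.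
have /andP[q_gt0 q_lt1] := mgf_product_lt1 (ltW rho1_gt0) rho1_lt_rho rho_le1.
by apply: (second_class_ae ma ms Pa Ps indep _ q_gt0 q_lt1); lra.
Qed.
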